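(* Let $D$ be a finite group with $d=|D|\geq2$, and let $\overline{\Gamma}$ be the undirected graph whose vertices are the finitely supported functions $f:\Z\to D$, two vertices being adjacent iff they differ at exactly one point of $\Z$. Let $X$ be a finite subgraph of $\overline{\Gamma}$ with $V\ge1$ vertices. Then $X$ has at most $\frac{d-1}{2}V\log_d(V)$ edges, and equality holds only if $X$ is a $d$-ary hypercube, i.e. there exist a finite set $C\subset\Z$ and a finitely supported $h:\Z\to D$ such that $V(X)=\{g:g(x)=h(x)\ \forall x\notin C\}$ and $X$ contains every edge of $\overline{\Gamma}$ between vertices of $V(X)$.
   Context: A finitely supported function $f:\Z\to D$ is one with $\{x:f(x)\neq\mathrm{Id}_D\}$ finite. *)

From HB Require Import structures.
From mathcomp Require Import all_boot all_order all_algebra all_fingroup.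
From mathcomp Require Import finmap.
From mathcomp Require Import reals exp.
Set Implicit Arguments. Unset Strict Implicit. Unset Printing Implicit Defensive.
Import Order.TTheory GRing.Theory Num.Theory.

Local Open Scope fset_scope.

Notation fsZ D := {fsfun int -> D with 1%g}.

Definition adjacent (D : finGroupType) (f g : fsZ D) : Prop :=
  exists x : int, f x != g x /\ forall y : int, f y != g y -> y = x.

Definition is_subgraph (D : finGroupType) (VX : {fset fsZ D})
  (EX : {fset {fset fsZ D}}) : Prop :=
  forall e, e \in EX -> exists u v, [/\ u \in VX, v \in VX, adjacent u v
                                      & e = [fset u; v]].

Definition is_hypercube (D : finGroupType) (VX : {fset fsZ D})
  (EX : {fset {fset fsZ D}}) : Prop :=
  exists (C : {fset int}) (h : fsZ D),
    (forall g : fsZ D, g \in VX <-> (forall x : int, x \notin C -> g x = h x)) /\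
    (forall u v, u \in VX -> v \in VX -> adjacent u v -> [fset u; v] \in EX).

(* Restricting to the union K of the supports of the vertices turns VX into a
   set S of functions K -> D, i.e. a vertex set of the Hamming graph D^K, and
   the claim becomes (d - 1) N ln N >= 2 E ln d for N = |S| and E edges.  This
   is proved by induction on N, splitting along a coordinate i on which S is
   not constant.  The edges inside the slices S_a = {v in S | v i = a} are
   handled by induction, which accounts for (d - 1) sum_u ln m_u of the budget,
   where m_u = |S_(u i)|.  Every other edge lies on an i-line: a point u whose
   i-line meets S in c_u points has c_u - 1 such neighbours, and
   (c - 1) ln d <= (d - 1) ln c for 1 <= c <= d by concavity of ln, with
   equality only for c = 1 and c = d.  What remains is
   sum_u ln (c_u m_u) <= N ln N, which is AM-GM: sum_u c_u m_u counts the pairs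
   (w, z) in S^2 such that w with its i-th coordinate replaced by z i lies in
   S, so it is at most N^2.  In the equality case the slices are subcubes,
   every line has 1 or d points and S is closed under that replacement, hence
   S is a subcube. *)

From HB Require Import structures.
From mathcomp Require Import all_boot all_order all_algebra all_fingroup.
From mathcomp Require Import finmap.
From mathcomp Require Import reals exp.
From mathcomp Require Import ring lra.
Set Implicit Arguments. Unset Strict Implicit. Unset Printing Implicit Defensive.
Import Order.TTheory GRing.Theory Num.Theory.

Section LnChord.
Variable R : realType.
Local Open Scope ring_scope.

Lemma ltr_nat_mul_ln (m n a b : nat) : (0 < a)%N -> (0 < b)%N ->
  (m%:R * ln (a%:R : R) < n%:R * ln b%:R) = (a ^ m < b ^ n)%N.
Proof.
move=> a_gt0 b_gt0; rewrite !mulr_natl -!lnXn ?ltr0n //.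
by rewrite ltr_ln ?posrE -?natrX ?ltr0n ?expn_gt0 ?a_gt0 ?b_gt0 // ltr_nat.
Qed.

Lemma ln4_ge1 : 1 <= ln (4 : R).
Proof.
have := @le_ln1Dx R (- 2^-1) ltac:(lra).
have -> : 1 - 2^-1 = (2 : R)^-1 by lra.
rewrite lnV ?posrE // => ln2_ge.
have -> : (4 : R) = 2 ^+ 2 by rewrite expr2; lra.
by rewrite lnXn // mulr2n; lra.
Qed.

Lemma ln_succ_lt (k : nat) : (0 < k)%N ->
  k%:R * ln (k.+2%:R : R) < k.+1%:R * ln k.+1%:R.
Proof.
case: k => [|[|[|k]]] // _; try by rewrite ltr_nat_mul_ln.
set n := k.+4; have n_gt0 : (0 : R) < n%:R by rewrite ltr0n.
(* n ln (n + 1) <= n ln n + 1 < n ln n + ln (n + 1) *)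
have ln_Sn_le : ln (n.+1%:R : R) <= ln n%:R + n%:R^-1.
  have -> : (n.+1%:R : R) = n%:R * (1 + n%:R^-1).
    by rewrite mulrDr mulr1 mulfV ?gt_eqF // -natr1.
  have inv_gt0 : (0 : R) < n%:R^-1 by rewrite invr_gt0.
  rewrite lnM ?posrE //; last by lra.
  by rewrite lerD2l le_ln1Dx //; lra.
have ln_Sn_gt1 : 1 < ln (n.+1%:R : R).
  apply: le_lt_trans ln4_ge1 _.
  by rewrite ltr_ln ?posrE ?ltr0n // ltr_nat.
have := ler_wpM2l (ltW n_gt0) ln_Sn_le.
rewrite mulrDr mulfV ?gt_eqF // (_ : k.+3%:R = n%:R - 1 :> R); last first.
  by rewrite /n -[k.+4]addn1 natrD addrK.
by rewrite mulrBl mul1r; lra.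
Qed.

Lemma ln_chord_lt (m n : nat) : (0 < m < n)%N ->
  m%:R * ln (n.+1%:R : R) < n%:R * ln m.+1%:R.
Proof.
case/andP=> m_gt0; elim: n => // n IH; rewrite ltnS leq_eqVlt.
case/orP=> [/eqP <-|lt_mn]; first exact: ln_succ_lt.
have n_gt0 : (0 < n)%N by rewrite (leq_trans m_gt0) // ltnW.
rewrite -(@ltr_pM2l _ n%:R) ?ltr0n // mulrCA.
apply: (@lt_trans _ _ (m%:R * (n.+1%:R * ln n.+1%:R))).
  by rewrite ltr_pM2l ?ltr0n // ln_succ_lt.
by rewrite mulrCA [X in _ < X]mulrCA ltr_pM2l ?ltr0n // IH.
Qed.

Lemma ln_chord (c d : nat) : (0 < c <= d)%N ->
  c.-1%:R * ln (d%:R : R) <= d.-1%:R * ln c%:R ?= iff (c == 1%N) || (c == d).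
Proof.
case: c => // -[_|m /andP [_]]; first by apply/leifP; rewrite /= mul0r ln1 mulr0.
case: d => // n; rewrite ltnS leq_eqVlt => /orP [/eqP ->|lt_mn].
  by apply/leifP; rewrite eqxx orbT.
apply/leifP; rewrite /= eqSS (ltn_eqF lt_mn).
by rewrite ln_chord_lt // lt_mn.
Qed.

End LnChord.

Section LogSum.
Variables (R : realType) (T : finType).
Local Open Scope ring_scope.

Lemma sum_ln_le (A : {pred T}) (p : T -> R) (M : R) :
  0 < M -> {in A, forall u, 0 < p u} ->
  \sum_(u in A) ln (p u) <= #|A|%:R * ln M + ((\sum_(u in A) p u) / M - #|A|%:R).
Proof.
move=> M_gt0 p_gt0.
(* ln x <= x - 1 at x = p u / M, summed over A *)
have : \sum_(u in A) (ln (p u) - ln M) <= \sum_(u in A) (p u / M - 1).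
  apply: ler_sum => u uA; have pu_gt0 := p_gt0 u uA.
  rewrite -ln_div ?posrE //; have := @le_ln1Dx R (p u / M - 1).
  by rewrite [1 + _]addrC subrK; apply; rewrite ltrBrDl subrr divr_gt0.
by rewrite !sumrB -mulr_suml !sumr_const -[ln M *+ _]mulr_natl; lra.
Qed.

End LogSum.

Lemma sum_nat_of_bool (T : finType) (A : {pred T}) (P : pred T) :
  (\sum_(x in A) P x)%N = #|[set x in A | P x]|.
Proof.
rewrite -sum1_card big_mkcond [RHS]big_mkcond; apply: eq_bigr => x _.
by rewrite !inE; case: (x \in A); case: (P x).
Qed.

Section HammingGraph.
Variables (I D : finType).
Local Notation T := {ffun I -> D}.
Implicit Types (S : {set T}) (u v w z : T) (i : I) (a : D).

Definition eq_off i u v := [forall k, (k != i) ==> (u k == v k)].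
Definition hadj u v := [exists i, (u i != v i) && eq_off i u v].
(* Ordered pairs, i.e. twice the number of edges. *)
Definition adj_count S := (\sum_(u in S) \sum_(v in S) hadj u v)%N.
Definition line S i u := [set v in S | eq_off i u v].
Definition slice S i a := [set v in S | v i == a].
Definition upd i u a : T := [ffun k => if k == i then a else u k].
Definition subcube S := exists (h : T) (C : {set I}),
  S = [set g : T | [forall k, (k \notin C) ==> (g k == h k)]].

Lemma eq_offxx i u : eq_off i u u.
Proof. by apply/forall_inP. Qed.

Lemma eq_offC i u v : eq_off i u v = eq_off i v u.
Proof.
by apply/forall_inP/forall_inP => eq_uv k /eq_uv; rewrite eq_sym.
Qed.

Lemma eq_off_trans i v u w : eq_off i u v -> eq_off i v w -> eq_off i u w.
Proof.
by move=> /forall_inP eq_uv /forall_inP eq_vw; apply/forall_inP => k ki;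
  rewrite (eqP (eq_uv k ki)) eq_vw.
Qed.

Lemma eq_off_eq i u v : eq_off i u v -> u i = v i -> u = v.
Proof.
move=> /forall_inP eq_uv eq_i; apply/ffunP => k.
by have [->|ki] := eqVneq k i; last exact/eqP/eq_uv.
Qed.

Lemma ffun_neq_at u v : u != v -> exists i, u i != v i.
Proof.
move=> ne_uv; apply/existsP; rewrite -negb_forall; apply: contra ne_uv.
by move=> /forallP eq_uv; apply/eqP/ffunP => k; apply/eqP.
Qed.

Lemma hadjC u v : hadj u v = hadj v u.
Proof.
by apply/existsP/existsP => -[i /andP [ne eq]]; exists i; rewrite eq_sym ne eq_offC.
Qed.

Lemma hadjxx u : hadj u u = false.
Proof. by apply/existsP => -[i]; rewrite eqxx. Qed.

Lemma hadj_neq_at i u v : hadj u v && (u i != v i) = eq_off i u v && (v != u).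
Proof.
apply/andP/andP => [[/existsP [j /andP [ne_j eq_j]] ne_i] | [eq_i ne]].
  have [ji|ji] := eqVneq j i; first by subst j; split; last by rewrite eq_sym;
    apply: contraNneq ne_i => ->.
  by move/forall_inP: eq_j => /(_ i); rewrite eq_sym ji (negbTE ne_i) => /(_ isT).
have ne_i : u i != v i by apply: contraNneq ne => /(eq_off_eq eq_i) ->.
by split => //; apply/existsP; exists i; rewrite ne_i.
Qed.

Lemma upd_at i u a : upd i u a i = a.
Proof. by rewrite ffunE eqxx. Qed.

Lemma eq_off_upd i u a : eq_off i (upd i u a) u.
Proof. by apply/forall_inP => k ki; rewrite ffunE (negbTE ki). Qed.

Lemma eq_upd i u v a : eq_off i v u && (v i == a) = (v == upd i u a).
Proof.
apply/andP/eqP => [[eq_vu /eqP vi]|->]; last by rewrite eq_off_upd upd_at.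
apply: (@eq_off_eq i); last by rewrite upd_at.
by apply: (eq_off_trans eq_vu); rewrite eq_offC eq_off_upd.
Qed.

Lemma big_slices (V : Type) (idx : V) (op : Monoid.com_law idx) S i (F : T -> V) :
  \big[op/idx]_(u in S) F u = \big[op/idx]_a \big[op/idx]_(u in slice S i a) F u.
Proof.
rewrite (partition_big (fun u => u i) predT) //=; apply: eq_bigr => a _.
by apply: eq_bigl => u; rewrite inE.
Qed.

Lemma line_mem S i u : u \in S -> u \in line S i u.
Proof. by move=> uS; rewrite inE uS eq_offxx. Qed.

Lemma line_inj S i u : {in line S i u &, injective (fun v => v i)}.
Proof.
move=> v w; rewrite !inE => /andP [_ eq_uv] /andP [_ eq_uw].
by apply: eq_off_eq; rewrite (eq_off_trans _ eq_uw) // eq_offC.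
Qed.

Lemma card_line S i u : u \in S -> (0 < #|line S i u| <= #|D|)%N.
Proof.
by move=> uS; rewrite (leq_card_in _ _ (@line_inj S i u)) andbT; apply/card_gt0P;
  exists u; apply: line_mem.
Qed.

Lemma card_line_slice_gt0 S i u : u \in S ->
  (0 < #|line S i u| * #|slice S i (u i)|)%N.
Proof.
move=> uS; have /andP [line_gt0 _] := card_line i uS.
by rewrite muln_gt0 line_gt0; apply/card_gt0P; exists u; rewrite inE uS eqxx.
Qed.

Lemma line_full S i u : #|line S i u| = #|D| ->
  forall a, exists2 v, v \in line S i u & v i = a.
Proof.
move=> full a; have : a \in [set (v : T) i | v in line S i u].
  suff -> : [set (v : T) i | v in line S i u] = setT by [].
  by apply/eqP; rewrite eqEcard subsetT cardsT card_in_imset ?full ?leqnn //; apply: line_inj.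
by case/imsetP => v vL ->; exists v.
Qed.

Lemma card_slice_lt S i u v a : u \in S -> v \in S -> u i != v i ->
  (#|slice S i a| < #|S|)%N.
Proof.
move=> uS vS ne; apply: proper_card; apply/properP; split.
  by apply/subsetP => w; rewrite inE => /andP [].
have [<-|ua] := eqVneq (u i) a; first by exists v; rewrite // inE vS eq_sym.
by exists u; rewrite // inE uS.
Qed.

Lemma adj_count_split S i : adj_count S =
  (\sum_a adj_count (slice S i a) + \sum_(u in S) #|line S i u|.-1)%N.
Proof.
have split_at u v :
  (hadj u v : nat) = (hadj u v && (u i == v i)) + (hadj u v && (u i != v i)).
  by case: hadj; case: eqP.
rewrite /adj_count; under eq_bigr => u _ do
  under eq_bigr => v _ do rewrite split_at.
under eq_bigr => u _ do rewrite big_split /=.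
rewrite big_split /=; congr (_ + _).
  rewrite (big_slices _ _ i); apply: eq_bigr => a _.
  apply: eq_bigr => u; rewrite inE => /andP [_ /eqP <-].
  rewrite [RHS]big_mkcond [LHS]big_mkcond; apply: eq_bigr => v _; rewrite inE.
  by case: (v \in S) => //=; rewrite eq_sym; case: (_ == _); rewrite ?andbT ?andbF.
apply: eq_bigr => u uS; rewrite (cardsD1 u) line_mem //= add0n -sum1_card.
rewrite big_mkcond [RHS]big_mkcond; apply: eq_bigr => v _.
by rewrite hadj_neq_at !inE; case: (v \in S); case: eq_off; case: (v != u).
Qed.

Lemma adj_count_le1 S : (#|S| <= 1)%N -> adj_count S = 0.
Proof.
move=> /card_le1_eqP S_le1; rewrite /adj_count big1 // => u uS.
by rewrite big1 // => v vS; rewrite (S_le1 u v) ?hadjxx.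
Qed.

Lemma line_slice_count S i :
  (\sum_(u in S) #|line S i u| * #|slice S i (u i)|)%N =
  (\sum_(w in S) \sum_(z in S) (upd i w (z i) \in S))%N.
Proof.
have pairs u : (#|line S i u| * #|slice S i (u i)|)%N =
    (\sum_(w in S) \sum_(z in S) (u == upd i w (z i)))%N.
  rewrite /line /slice -!sum_nat_of_bool big_distrl; apply: eq_bigr => w _.
  by rewrite big_distrr; apply: eq_bigr => z _; rewrite /= mulnb eq_sym eq_upd.
rewrite (eq_bigr _ (fun u _ => pairs u)) exchange_big; apply: eq_bigr => w _.
rewrite exchange_big; apply: eq_bigr => z _; set c := upd i w (z i).
rewrite big_mkcond (eq_bigr (fun u => if u == c then (u \in S : nat) else 0)).
  by rewrite -big_mkcond big_pred1_eq.
by move=> u _; case: (u \in S); case: (u == c).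
Qed.

Lemma line_slice_leqif S i :
  (\sum_(u in S) #|line S i u| * #|slice S i (u i)| <= #|S| ^ 2
     ?= iff [forall w in S, forall z in S, upd i w (z i) \in S])%N.
Proof.
have -> : (#|S| ^ 2 = \sum_(w in S) \sum_(z in S) 1)%N.
  by rewrite sum1_card sum_nat_const mulnn.
rewrite line_slice_count; apply: leqif_sum => w _; apply: leqif_sum => z _.
by have := leqif_eq (leq_b1 (upd i w (z i) \in S)); rewrite eqb1.
Qed.

Lemma subcube1 h : subcube [set h].
Proof.
exists h, set0; apply/setP => g; rewrite !inE.
apply/eqP/forallP => [-> k|eq_gh]; first by rewrite eqxx implybT.
by apply/ffunP => k; apply/eqP; have := eq_gh k; rewrite inE.
Qed.

Lemma subcube_slice S i u v :
  u \in S -> v \in S -> u i != v i ->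
  {in S &, forall w z, upd i w (z i) \in S} ->
  {in S, forall w, (#|line S i w| == 1%N) || (#|line S i w| == #|D|)} ->
  subcube (slice S i (u i)) -> subcube S.
Proof.
move=> uS vS ne_uv closed lines [h [C sliceE]].
have slice_sub g : g \in slice S i (u i) -> g \in S by rewrite inE => /andP [].
have hi : h i = u i.
  have : h \in slice S i (u i) by rewrite sliceE inE; apply/forall_inP.
  by rewrite inE => /andP [_ /eqP].
have full : #|line S i u| = #|D|.
  have /orP [/eqP line1|/eqP //] := lines u uS.
  suff : (1 < #|line S i u|)%N by rewrite line1.
  apply/card_gt1P; exists u, (upd i u (v i)); split; first exact: line_mem.
    by rewrite inE closed // eq_offC eq_off_upd.
  apply/eqP => /(congr1 (fun g : T => g i)); rewrite upd_at => eq_i.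
  by rewrite eq_i eqxx in ne_uv.
exists h, (i |: C); apply/setP => g; rewrite inE.
apply/idP/forall_inP => [gS k|g_off].
  rewrite !inE negb_or => /andP [ki kC].
  have : upd i g (u i) \in slice S i (u i) by rewrite inE closed // upd_at eqxx.
  by rewrite sliceE inE => /forall_inP /(_ k kC); rewrite ffunE (negbTE ki).
have [w wL wi] := line_full full (g i).
have g_slice : upd i g (u i) \in slice S i (u i).
  rewrite sliceE inE; apply/forall_inP => k kC; rewrite ffunE.
  have [->|ki] := eqVneq k i; first by rewrite hi.
  by rewrite g_off // !inE negb_or ki.
have -> : g = upd i (upd i g (u i)) (w i).
  by apply/ffunP => k; rewrite !ffunE; have [->|//] := eqVneq k i.
by apply: closed; [exact: slice_sub | move: wL; rewrite inE => /andP []].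
Qed.

End HammingGraph.

Section EdgeIsoperimetry.
Variables (R : realType) (I D : finType).
Local Notation T := {ffun I -> D}.
Local Open Scope ring_scope.
Implicit Types (S : {set T}) (i : I) (u w z : T).

Definition defect S : R :=
  #|D|.-1%:R * (#|S|%:R * ln #|S|%:R) - (adj_count S)%:R * ln #|D|%:R.

Lemma defect_le1 S : (#|S| <= 1)%N -> defect S = 0.
Proof.
move=> S_le1; rewrite /defect adj_count_le1 // mul0r subr0.
by case: #|S| S_le1 => [|[|]] //= _; rewrite ?mul0r ?ln1 ?mulr0.
Qed.

Lemma sum_ln_line_slice_bound S i : (0 < #|S|)%N ->
  \sum_(u in S) ln (#|line S i u| * #|slice S i (u i)|)%:R <= #|S|%:R * ln #|S|%:R
  + ((\sum_(u in S) #|line S i u| * #|slice S i (u i)|)%N%:R / #|S|%:R - #|S|%:R) :> R.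
Proof.
move=> S_gt0; rewrite natr_sum; apply: sum_ln_le; first by rewrite ltr0n.
by move=> u uS; rewrite ltr0n card_line_slice_gt0.
Qed.

Definition chord_gap (c : nat) : R :=
  #|D|.-1%:R * ln c%:R - c.-1%:R * ln #|D|%:R.

Lemma chord_gap_ge0 c : (0 < c <= #|D|)%N -> 0 <= chord_gap c.
Proof. by move=> c_in; rewrite subr_ge0 (ln_chord R c_in).1. Qed.

Lemma chord_gap_eq0 c : (0 < c <= #|D|)%N -> chord_gap c = 0 ->
  (c == 1%N) || (c == #|D|).
Proof. by move=> c_in /eqP; rewrite subr_eq0 eq_sym (ln_chord R c_in).2. Qed.

Definition pair_gap S i : R :=
  #|S|%:R * ln #|S|%:R - \sum_(u in S) ln (#|line S i u| * #|slice S i (u i)|)%:R.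

Lemma pair_gap_ge0 S i : 0 <= pair_gap S i.
Proof.
rewrite subr_ge0; have [/cards0_eq ->|S_gt0] := posnP #|S|.
  by rewrite big_set0 cards0 mul0r.
have := sum_ln_line_slice_bound i S_gt0.
have : (\sum_(u in S) #|line S i u| * #|slice S i (u i)|)%N%:R / #|S|%:R <= #|S|%:R :> R.
  by rewrite ler_pdivrMr ?ltr0n // -natrM ler_nat mulnn (line_slice_leqif S i).1.
lra.
Qed.

Lemma pair_gap_eq0 S i : pair_gap S i = 0 ->
  {in S &, forall w z, upd i w (z i) \in S}.
Proof.
move/eqP; rewrite subr_eq0 eq_sym => /eqP eq_N.
have [/cards0_eq -> w|S_gt0] := posnP #|S|; first by rewrite inE.
have := sum_ln_line_slice_bound i S_gt0; rewrite eq_N addrC -lerBlDr subrr subr_ge0.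
rewrite ler_pdivlMr ?ltr0n // -natrM ler_nat mulnn => P_ge.
case: (line_slice_leqif S i) => P_le.
rewrite eqn_leq P_le P_ge => /esym /forall_inP all_w w z wS zS.
by have /forall_inP := all_w w wS; apply.
Qed.

Lemma defect_split S i : defect S = \sum_a defect (slice S i a)
  + \sum_(u in S) chord_gap #|line S i u| + #|D|.-1%:R * pair_gap S i.
Proof.
have sum_slices : \sum_a #|slice S i a|%:R * ln #|slice S i a|%:R =
    \sum_(u in S) ln #|slice S i (u i)|%:R :> R.
  rewrite (big_slices _ _ i); apply: eq_bigr => a _.
  rewrite (eq_bigr (fun _ => ln #|slice S i a|%:R)) ?sumr_const ?mulr_natl //.
  by move=> u; rewrite inE => /andP [_ /eqP ->].
have ln_prod : \sum_(u in S) ln (#|line S i u| * #|slice S i (u i)|)%:R =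
    \sum_(u in S) ln #|line S i u|%:R + \sum_(u in S) ln #|slice S i (u i)|%:R :> R.
  rewrite -big_split; apply: eq_bigr => u uS.
  have := card_line_slice_gt0 i uS; rewrite muln_gt0 => /andP [line_gt0 slice_gt0].
  by rewrite natrM lnM // posrE ltr0n.
rewrite /defect /chord_gap /pair_gap (adj_count_split S i) natrD !natr_sum mulrDl.
by rewrite !mulr_suml ln_prod -sum_slices !sumrB -!mulr_sumr; ring.
Qed.

Lemma defect_ge0 S : 0 <= defect S.
Proof.
have [n] := ubnP #|S|; elim: n S => // n IH S; rewrite ltnS => S_le.
have [S_le1|/card_gt1P [u [v [uS vS /ffun_neq_at [i ne_i]]]]] := leqP #|S| 1.
  by rewrite defect_le1.
rewrite (defect_split S i); apply: addr_ge0; first apply: addr_ge0.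
- by apply: sumr_ge0 => a _; apply/IH/(leq_trans (card_slice_lt a uS vS ne_i)).
- by apply: sumr_ge0 => w wS; rewrite chord_gap_ge0 ?card_line.
- by rewrite mulr_ge0 ?ler0n ?pair_gap_ge0.
Qed.

Lemma defect_eq0 S : (1 < #|D|)%N -> (0 < #|S|)%N -> defect S = 0 -> subcube S.
Proof.
move=> D_gt1; have [n] := ubnP #|S|; elim: n S => // n IH S; rewrite ltnS => S_le S_gt0.
have [S_le1|/card_gt1P [u [v [uS vS /ffun_neq_at [i ne_i]]]]] := leqP #|S| 1.
  have /cards1P [h ->] : #|S| == 1%N by rewrite eqn_leq S_le1.
  by move=> _; apply: subcube1.
have slices_ge0 : 0 <= \sum_a defect (slice S i a).
  by apply: sumr_ge0 => a _; apply: defect_ge0.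
have chords_ge0 w : w \in S -> 0 <= chord_gap #|line S i w|.
  by move=> wS; rewrite chord_gap_ge0 ?card_line.
have chords_sum_ge0 := sumr_ge0 _ chords_ge0.
have dm_gt0 : (0 : R) < #|D|.-1%:R by rewrite ltr0n ltn_predRL.
have pair_ge0 : 0 <= #|D|.-1%:R * pair_gap S i by rewrite mulr_ge0 ?ler0n ?pair_gap_ge0.
rewrite (defect_split S i) => /eqP; rewrite !paddr_eq0 ?addr_ge0 //.
rewrite mulf_eq0 (gt_eqF dm_gt0) /= => /andP [/andP [/eqP slices0 /eqP chords0] /eqP pair0].
apply: (subcube_slice uS vS ne_i (pair_gap_eq0 pair0)).
  move=> w wS; apply: chord_gap_eq0; first exact: card_line.
  exact: (psumr_eq0P chords_ge0 chords0).
apply: IH; first exact: leq_trans (card_slice_lt _ uS vS ne_i) S_le.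
  by apply/card_gt0P; exists u; rewrite inE uS eqxx.
exact: (psumr_eq0P (fun a _ => defect_ge0 _) slices0).
Qed.

End EdgeIsoperimetry.

Section Restriction.
Variables (D : finGroupType) (VX : {fset fsZ D}).
Local Open Scope fset_scope.
Implicit Types (f g : fsZ D) (x y : VX) (n : int).

Definition supp_VX : {fset int} := \bigcup_(f <- VX) finsupp f.
Definition restr (f : fsZ D) : {ffun supp_VX -> D} := [ffun k => f (val k)].
Definition restr_VX : {set {ffun supp_VX -> D}} := [set restr (val f) | f : VX].

Lemma finsupp_VX f : f \in VX -> finsupp f `<=` supp_VX.
Proof. by move=> fV; apply: bigfcup_sup. Qed.

Lemma restr_out f n :
  finsupp f `<=` supp_VX -> n \notin supp_VX -> f n = 1%g.
Proof.
by move=> /fsubsetP f_sub n_out; apply: fsfun_dflt; apply: contra n_out; apply: f_sub.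
Qed.

Lemma restr_inj f g : finsupp f `<=` supp_VX -> finsupp g `<=` supp_VX ->
  restr f = restr g -> f = g.
Proof.
move=> f_sub g_sub eq_fg; apply/fsfunP => n.
have [nK|n_out] := boolP (n \in supp_VX); last by rewrite !restr_out.
by have := congr1 (fun h : {ffun supp_VX -> D} => h [` nK]) eq_fg; rewrite !ffunE.
Qed.

Lemma adjacent_restr f g : finsupp f `<=` supp_VX -> finsupp g `<=` supp_VX ->
  adjacent f g <-> hadj (restr f) (restr g).
Proof.
move=> f_sub g_sub; have in_supp n : f n != g n -> n \in supp_VX.
  by apply: contraR => n_out; rewrite !restr_out.
split=> [[n [ne_n only_n]] | /existsP [k /andP [ne_k /forall_inP only_k]]].
  apply/existsP; exists [` in_supp n ne_n]; rewrite !ffunE ne_n /=.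
  apply/forall_inP => k ne_k; rewrite !ffunE; apply: contraNT ne_k => ne.
  by apply/eqP/val_inj; apply: only_n.
rewrite !ffunE in ne_k; exists (val k); split=> // n ne_n.
have := only_k [` in_supp n ne_n]; rewrite !ffunE /= (negbTE ne_n).
by case: eqVneq => [<-|_ /(_ isT)].
Qed.

Lemma restr_VX_inj : injective (fun x : VX => restr (val x)).
Proof. by move=> x y /restr_inj eq_xy; apply/val_inj/eq_xy; apply/finsupp_VX/valP. Qed.

Lemma card_restr_VX : #|restr_VX| = #|` VX|.
Proof. by rewrite card_imset ?cardfE //; apply: restr_VX_inj. Qed.

Definition vadj (x y : VX) := hadj (restr (val x)) (restr (val y)).
Definition oriented_adj : {set VX * VX} :=
  [set p | vadj p.1 p.2 & (enum_rank p.1 < enum_rank p.2)%N].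
Definition edge_of (p : VX * VX) : {fset fsZ D} := [fset val p.1; val p.2].
Definition edges_VX := [fset edge_of p | p in oriented_adj].

Lemma card_oriented_adj :
  #|oriented_adj| = (\sum_x \sum_y (vadj x y && (enum_rank x < enum_rank y)))%N.
Proof.
rewrite pair_big /= -sum1_card big_mkcond /=; apply: eq_bigr => p _.
by rewrite inE; case: ifP.
Qed.

Lemma adj_count_restr_VX : adj_count restr_VX = (2 * #|oriented_adj|)%N.
Proof.
have split_rank x y : (vadj x y : nat) = ((vadj x y && (enum_rank x < enum_rank y))
    + (vadj y x && (enum_rank y < enum_rank x)))%N.
  case: ltngtP => [lt|gt|/val_inj/enum_rank_inj ->]; rewrite /vadj ?hadjxx //.
  - by rewrite andbT andbF addn0.
  - by rewrite andbT andbF add0n hadjC.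
rewrite /adj_count (big_imset _ (in2W restr_VX_inj)) /=.
under eq_bigr => x _ do rewrite (big_imset _ (in2W restr_VX_inj)) /=.
under eq_bigr => x _ do under eq_bigr => y _ do rewrite -/(vadj x y) split_rank.
under eq_bigr => x _ do rewrite big_split /=.
by rewrite big_split /= [X in (_ + X)%N]exchange_big addnn -mul2n card_oriented_adj.
Qed.

Lemma adjacent_edge_of u v : u \in VX -> v \in VX -> adjacent u v ->
  [fset u; v] \in edges_VX.
Proof.
move=> uV vV adj_uv; set x : VX := [` uV]; set y : VX := [` vV].
have adj_xy : vadj x y by apply/adjacent_restr => //; apply: finsupp_VX.
have [lt|gt|/val_inj/enum_rank_inj eq_xy] := ltngtP (enum_rank x) (enum_rank y).
- by apply/imfsetP; exists (x, y); rewrite // inE; apply/andP.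
- apply/imfsetP; exists (y, x); first by rewrite inE /= /vadj hadjC; apply/andP.
  by rewrite /edge_of fsetUC.
- have [n [ne_n _]] := adj_uv; have := congr1 val eq_xy => /= eq_uv.
  by rewrite eq_uv eqxx in ne_n.
Qed.

Lemma card_edges_VX : (#|` edges_VX| <= #|oriented_adj|)%N.
Proof.
apply: leq_trans (leq_imfset_card _ _ _) _.
rewrite -(card_uniqP (enum_finmem_uniq _)); apply: subset_leq_card.
by apply/subsetP => p; rewrite enum_finmemE.
Qed.

Lemma subgraph_edges_VX EX : is_subgraph VX EX -> EX `<=` edges_VX.
Proof.
move=> sub; apply/fsubsetP => e /sub [u [v [uV vV adj_uv ->]]].
exact: adjacent_edge_of.
Qed.

Lemma card_subgraph_le EX : is_subgraph VX EX -> (#|` EX| <= #|oriented_adj|)%N.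
Proof.
move=> sub; apply: leq_trans card_edges_VX.
exact: fsubset_leq_card (subgraph_edges_VX sub).
Qed.

Lemma subgraph_complete EX : is_subgraph VX EX -> #|` EX| = #|oriented_adj| ->
  {in VX &, forall u v, adjacent u v -> [fset u; v] \in EX}.
Proof.
move=> /subgraph_edges_VX EX_sub card_EX u v uV vV adj_uv.
have card_eq : #|` EX| = #|` edges_VX|.
  by apply/eqP; rewrite eqn_leq fsubset_leq_card // card_EX card_edges_VX.
have /(fsubset_cardP card_eq) eq_EX := EX_sub.
by rewrite eq_EX adjacent_edge_of.
Qed.

Lemma hypercube_of_subcube EX : subcube restr_VX ->
  {in VX &, forall u v, adjacent u v -> [fset u; v] \in EX} -> is_hypercube VX EX.
Proof.
move=> [h [C restrE]] complete.
have /imsetP [x0 _ hE] : h \in restr_VX by rewrite restrE inE; apply/forall_inP.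
have x0_sub := finsupp_VX (valP x0).
exists [fset val k | k in C], (val x0); split=> // g; split=> [gV n nC | g_off].
  have [nK|n_out] := boolP (n \in supp_VX); last by rewrite !restr_out // finsupp_VX.
  have : restr g \in restr_VX by apply/imsetP; exists [` gV].
  have nK_C : [` nK] \notin C by apply: contra nC => nK_C; apply/imfsetP; exists [` nK].
  rewrite restrE inE => /forall_inP /(_ _ nK_C).
  by rewrite hE !ffunE => /eqP.
have g_sub : finsupp g `<=` supp_VX.
  apply/fsubsetP => n; rewrite mem_finsupp; apply: contraR => n_out.
  rewrite g_off ?restr_out //; apply: contra n_out => /imfsetP [k _ ->].
  exact: valP.
have : restr g \in restr_VX.
  rewrite restrE inE; apply/forall_inP => k kC; rewrite hE !ffunE g_off //.
  by apply: contra kC => /imfsetP [k' k'C /val_inj ->].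
by case/imsetP => y _ /(restr_inj g_sub (finsupp_VX (valP y))) ->; apply: valP.
Qed.

End Restriction.

Local Open Scope ring_scope.

Theorem mainTheorem6 (R : realType) (D : finGroupType)
  (VX : {fset fsZ D}) (EX : {fset {fset fsZ D}}) :
  (2 <= #|D|)%N -> (1 <= #|` VX|)%N -> is_subgraph VX EX ->
  let d : R := (#|D|%:R)%R in
  let V : R := (#|` VX|%:R)%R in
  ((#|` EX|%:R <= (d - 1) / 2 * V * (ln V / ln d))%R /\
   ((#|` EX|%:R = (d - 1) / 2 * V * (ln V / ln d))%R -> is_hypercube VX EX)).
Proof.
move=> D_gt1 VX_gt0 sub d V.
have lnd_gt0 : (0 : R) < ln d by rewrite ln_gt0 // ltr1n.
have lnd2_gt0 : (0 : R) < 2 * ln d by rewrite mulr_gt0.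
have rhsE : (d - 1) / 2 * V * (ln V / ln d) = (d - 1) * (V * ln V) / (2 * ln d).
  by field; rewrite gt_eqF.
have dm : #|D|.-1%:R = d - 1 :> R by rewrite -subn1 natrB // ltnW.
have defectE : defect R (restr_VX VX) =
    (d - 1) * (V * ln V) - #|oriented_adj VX|%:R * (2 * ln d).
  rewrite /defect adj_count_restr_VX card_restr_VX -/V natrM dm -/d.
  by congr (_ - _); rewrite mulrCA mulrA.
have EX_le : (#|` EX|%:R : R) * (2 * ln d) <= #|oriented_adj VX|%:R * (2 * ln d).
  by rewrite ler_pM2r // ler_nat card_subgraph_le.
have := defect_ge0 R (restr_VX VX); rewrite defectE subr_ge0 => bound.
rewrite rhsE ler_pdivlMr //; split; first exact: le_trans bound.
move=> /(congr1 (fun x => x * (2 * ln d))); rewrite mulfVK ?gt_eqF // => EX_eq.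
have card_EX : #|` EX| = #|oriented_adj VX|.
  apply/eqP; rewrite eqn_leq card_subgraph_le //= -(ler_nat R).
  by rewrite -(ler_pM2r lnd2_gt0) EX_eq.
apply: hypercube_of_subcube; last exact: subgraph_complete card_EX.
apply: (defect_eq0 (R := R)) => //; first by rewrite card_restr_VX.
by rewrite defectE -card_EX EX_eq subrr.
Qed.
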